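(* Let $n\ge 1$, let $\mu\in\mathbb{R}^n\setminus\{0\}$ and $\alpha\in\,]0,1/2[$. Let $\mathcal{D}=\mathbb{R}^n\setminus\{0,-\mu\}$ and define $\phi:\mathcal{D}\to\mathbb{R}^+$ by $$\phi(x)=Y(x)^\top Y(x),\qquad Y(x)=\|x\|^{-2\alpha}x-\|x+\mu\|^{-2\alpha}(x+\mu).$$ Then the global maximum of $\phi$ on $\mathcal{D}$ is attained at $x=-\mu/2$.
   Context: $\|\cdot\|$ denotes the Euclidean norm on $\mathbb{R}^n$. *)

From mathcomp Require Import all_boot all_order all_algebra.
From mathcomp Require Import reals exp.
Set Implicit Arguments. Unset Strict Implicit. Unset Printing Implicit Defensive.
Import Order.TTheory GRing.Theory Num.Theory.
Local Open Scope ring_scope.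

Definition dotv (R : realType) (n : nat) (u v : 'rV[R]_n) : R :=
  \sum_(i < n) u ord0 i * v ord0 i.

Definition enorm (R : realType) (n : nat) (x : 'rV[R]_n) : R :=
  Num.sqrt (dotv x x).

Definition Yf (R : realType) (n : nat) (alpha : R) (mu x : 'rV[R]_n) : 'rV[R]_n :=
  powR (enorm x) (- (2 * alpha)) *: x
  - powR (enorm (x + mu)) (- (2 * alpha)) *: (x + mu).

Definition phi (R : realType) (n : nat) (alpha : R) (mu x : 'rV[R]_n) : R :=
  dotv (Yf alpha mu x) (Yf alpha mu x).

(* Write b = 1 - 2 alpha, which lies in ]0, 1[, and p = |x|, q = |x + mu|,
   m = |mu|.  Since |x|^(-2 alpha) x = p^b (x / p), the law of cosines gives
     p q phi(x) = (((p+q)/2)^2 - (m/2)^2) (p^b - q^b)^2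
                + ((m/2)^2 - ((p-q)/2)^2) (p^b + q^b)^2,
   with both weights nonnegative by the triangle inequality.  Concavity and
   subadditivity of t |-> t^b give (p^b -/+ q^b)^2 <= 4 (((p -/+ q)/2)^2)^b, and
   concavity once more, on the chord from ((p-q)/2)^2 to ((p+q)/2)^2 through
   (m/2)^2, yields phi(x) <= 4 ((m/2)^2)^b, which is phi(-mu/2). *)

From mathcomp Require Import all_boot all_order all_algebra.
From mathcomp Require Import reals exp ring lra.
Import Order.TTheory GRing.Theory Num.Theory.
Local Open Scope ring_scope.

Section PowR.
Context {R : realType}.

Lemma sqr_powR (x r : R) : 0 <= x -> (x `^ r) ^+ 2 = (x ^+ 2) `^ r.
Proof. by move=> x_ge0; rewrite !expr2 powRM. Qed.

Lemma powRN_div (t r : R) : 0 < t -> t `^ (- r) = t `^ (1 - r) / t.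
Proof.
move=> t_gt0; rewrite powRB ?(gt_eqF t_gt0) ?implybT // powRr1 ?(ltW t_gt0) //.
by rewrite powRN mulrAC divff ?(gt_eqF t_gt0) // mul1r.
Qed.

End PowR.

Section PowRConcave.
Context {R : realType}.
Variable b : R.
Hypotheses (b_gt0 : 0 < b) (b_lt1 : b < 1).

(* Young's inequality [y^b x^(1-b) <= b y + (1-b) x], multiplied by [x^(b-1)]. *)
Lemma powR_le_tangent (x y : R) : 0 < x -> 0 <= y ->
  y `^ b <= x `^ b + b * (x `^ b / x) * (y - x).
Proof.
move=> x_gt0 y_ge0.
have b'_gt0 : 0 < 1 - b by rewrite subr_gt0.
have xb_gt0 : 0 < x `^ b by rewrite powR_gt0.
have := @conjugate_powR R (y `^ b) (x `^ (1 - b)) b^-1 (1 - b)^-1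
  (powR_ge0 _ _) (powR_ge0 _ _).
rewrite !invr_gt0 b_gt0 b'_gt0 !invrK addrC subrK => /(_ isT isT erefl).
rewrite -!powRrM !mulfV ?gt_eqF // (powRr1 y_ge0) (powRr1 (ltW x_gt0)).
rewrite powRB ?gt_eqF ?implybT // (powRr1 (ltW x_gt0)) => young.
have -> : y `^ b = y `^ b * (x / x `^ b) * (x `^ b / x) by field; rewrite !gt_eqF.
have -> : x `^ b + b * (x `^ b / x) * (y - x) = (y * b + x * (1 - b)) * (x `^ b / x).
  by field; rewrite gt_eqF.
by rewrite ler_wpM2r // ltW // divr_gt0.
Qed.

Lemma powR_chord (x1 x x2 : R) : 0 <= x1 -> x1 <= x -> x <= x2 ->
  (x2 - x) * x1 `^ b + (x - x1) * x2 `^ b <= (x2 - x1) * x `^ b.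
Proof.
move=> x1_ge0 x1x xx2; have [x_eq0|x_neq0] := eqVneq x 0.
  have -> : x1 = x by apply/le_anti; rewrite x1x x_eq0 x1_ge0.
  by rewrite subrr mul0r addr0.
have x_gt0 : 0 < x by rewrite lt_neqAle eq_sym x_neq0 (le_trans x1_ge0).
have d2_ge0 : 0 <= x2 - x by rewrite subr_ge0.
have d1_ge0 : 0 <= x - x1 by rewrite subr_ge0.
have T1 := ler_wpM2l d2_ge0 (powR_le_tangent x x1 x_gt0 x1_ge0).
have T2 := ler_wpM2l d1_ge0
  (powR_le_tangent x x2 x_gt0 (le_trans x1_ge0 (le_trans x1x xx2))).
move: T1 T2; set H := x `^ b; set D := b * (H / x) => T1 T2.
have -> : (x2 - x1) * H
    = (x2 - x) * (H + D * (x1 - x)) + (x - x1) * (H + D * (x2 - x)) by ring.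
exact: lerD.
Qed.

Lemma powR_subadd (x y : R) : 0 <= x -> 0 <= y -> (x + y) `^ b <= x `^ b + y `^ b.
Proof.
move=> x_ge0 y_ge0; have [->|y_neq0] := eqVneq y 0.
  by rewrite addr0 powR0 ?gt_eqF // addr0.
have xy_gt0 : 0 < x + y by rewrite ltr_wpDl // lt_neqAle eq_sym y_neq0.
have x_le : x <= x + y by rewrite lerDl.
have y_le : y <= x + y by rewrite lerDr.
have Cx := powR_chord 0 x (x + y) (lexx 0) x_ge0 x_le.
have Cy := powR_chord 0 y (x + y) (lexx 0) y_ge0 y_le.
rewrite powR0 ?gt_eqF // !subr0 !mulr0 !add0r in Cx Cy.
by rewrite -(ler_pM2l xy_gt0) mulrDr mulrDl; exact: lerD.
Qed.

Lemma powR_midpoint (x y : R) : 0 <= x -> 0 <= y ->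
  x `^ b + y `^ b <= 2 * ((x + y) / 2) `^ b.
Proof.
move=> x_ge0 y_ge0; have [xy_eq0|xy_neq0] := eqVneq (x + y) 0.
  have [-> ->] : x = 0 /\ y = 0 by split; lra.
  by rewrite addr0 mul0r powR0 ?gt_eqF // addr0 mulr0.
have m_gt0 : 0 < (x + y) / 2.
  by rewrite divr_gt0 // lt_neqAle eq_sym xy_neq0 addr_ge0.
have := powR_le_tangent _ x m_gt0 x_ge0; have := powR_le_tangent _ y m_gt0 y_ge0.
lra.
Qed.

Lemma powRB_le_dist (x y : R) : 0 <= x -> 0 <= y ->
  x `^ b - y `^ b <= 2 * (`|x - y| / 2) `^ b.
Proof.
move=> x_ge0 y_ge0; have [yx|xy] := lerP y x; last first.
  have xy_pow : x `^ b <= y `^ b by rewrite ge0_ler_powR ?ltW.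
  by have := powR_ge0 ((y - x) / 2) b; lra.
set d := (x - y) / 2.
have d_ge0 : 0 <= d by rewrite divr_ge0 ?subr_ge0.
have -> : x = y + d + d by rewrite /d; field.
have S1 := powR_subadd (y + d) d (addr_ge0 y_ge0 d_ge0) d_ge0.
have S2 := powR_subadd y d y_ge0 d_ge0.
lra.
Qed.

Definition phi_sides (p q m : R) : R :=
  (p `^ b) ^+ 2 + (q `^ b) ^+ 2 - p `^ b * q `^ b / (p * q) * (p ^+ 2 + q ^+ 2 - m ^+ 2).

Lemma phi_sides_le (p q m : R) : 0 < p -> 0 < q -> 0 <= m ->
  (p - q) ^+ 2 <= m ^+ 2 <= (p + q) ^+ 2 ->
  phi_sides p q m <= 4 * ((m / 2) `^ b) ^+ 2.
Proof.
move=> p_gt0 q_gt0 m_ge0 /andP[lo hi]; rewrite /phi_sides.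
have p_ge0 := ltW p_gt0; have q_ge0 := ltW q_gt0.
set X := p `^ b; set Y := q `^ b; set Z := (m / 2) `^ b.
set G1 := (`|p - q| / 2) `^ b; set G2 := ((p + q) / 2) `^ b.
have X_ge0 : 0 <= X := powR_ge0 _ _.
have Y_ge0 : 0 <= Y := powR_ge0 _ _.
have G1_ge0 : 0 <= G1 := powR_ge0 _ _.
have G2_ge0 : 0 <= G2 := powR_ge0 _ _.
have F1 : (X - Y) ^+ 2 <= 4 * G1 ^+ 2.
  have := powRB_le_dist p q p_ge0 q_ge0; have := powRB_le_dist q p q_ge0 p_ge0.
  by rewrite distrC -/X -/Y -/G1; nra.
have F2 : (X + Y) ^+ 2 <= 4 * G2 ^+ 2.
  by have := powR_midpoint p q p_ge0 q_ge0; rewrite -/X -/Y -/G2; nra.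
have dist2 : (`|p - q| / 2) ^+ 2 = ((p - q) / 2) ^+ 2.
  by rewrite !expr_div_n real_normK ?num_real.
set x1 := ((p - q) / 2) ^+ 2; set x := (m / 2) ^+ 2; set x2 := ((p + q) / 2) ^+ 2.
have C : (x2 - x) * G1 ^+ 2 + (x - x1) * G2 ^+ 2 <= (x2 - x1) * Z ^+ 2.
  rewrite /G1 /G2 /Z !sqr_powR ?divr_ge0 ?addr_ge0 // dist2.
  by apply: powR_chord; rewrite /x1 /x /x2 ?sqr_ge0 // !expr_div_n; lra.
have pq_gt0 : 0 < p * q by rewrite mulr_gt0.
rewrite -(ler_pM2l pq_gt0).
have -> : p * q * (X ^+ 2 + Y ^+ 2 - X * Y / (p * q) * (p ^+ 2 + q ^+ 2 - m ^+ 2))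
    = (x2 - x) * (X - Y) ^+ 2 + (x - x1) * (X + Y) ^+ 2.
  by rewrite /x1 /x /x2; field; rewrite !gt_eqF.
have -> : p * q = x2 - x1 by rewrite /x1 /x2; field.
have w1 : 0 <= x2 - x by rewrite subr_ge0 /x /x2 !expr_div_n; lra.
have w2 : 0 <= x - x1 by rewrite subr_ge0 /x /x1 !expr_div_n; lra.
have := ler_wpM2l w1 F1; have := ler_wpM2l w2 F2.
lra.
Qed.

End PowRConcave.

Section EuclideanSpace.
Context {R : realType} {n : nat}.
Implicit Types u v : 'rV[R]_n.

Lemma dotv_ge0 u : 0 <= dotv u u.
Proof. by rewrite sumr_ge0 // => i _; rewrite -expr2 sqr_ge0. Qed.

Lemma dotv_gt0 u : u != 0 -> 0 < dotv u u.
Proof.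
move=> u_neq0; rewrite lt_def dotv_ge0 andbT; apply: contraNN u_neq0 => /eqP uu0.
apply/eqP/rowP => i; rewrite mxE.
have /eqP : u ord0 i * u ord0 i = 0.
  by move/psumr_eq0P: uu0 => -> // j _; rewrite -expr2 sqr_ge0.
by rewrite mulf_eq0 orbb => /eqP.
Qed.

Lemma dotvZ (a : R) u : dotv (a *: u) (a *: u) = a ^+ 2 * dotv u u.
Proof. by rewrite /dotv mulr_sumr; apply: eq_bigr => i _; rewrite !mxE; ring. Qed.

Lemma dotv_scale_sub (a c : R) u v :
  dotv (a *: u - c *: v) (a *: u - c *: v) =
  a ^+ 2 * dotv u u + c ^+ 2 * dotv v v - a * c * (2 * dotv u v).
Proof.
rewrite /dotv !mulr_sumr -big_split -sumrB /=.
by apply: eq_bigr => i _; rewrite !mxE; ring.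
Qed.

Lemma dotv_polar u v : 2 * dotv u v = dotv u u + dotv v v - dotv (v - u) (v - u).
Proof.
rewrite /dotv !mulr_sumr -big_split -sumrB /=.
by apply: eq_bigr => i _; rewrite !mxE; ring.
Qed.

Lemma cauchy_schwarz u v : dotv u v ^+ 2 <= dotv u u * dotv v v.
Proof.
have [->|v_neq0] := eqVneq v 0.
  have -> : dotv u 0 = 0 by rewrite /dotv big1 // => i _; rewrite mxE mulr0.
  by rewrite expr0n /= mulr_ge0 ?dotv_ge0.
have := dotv_ge0 (dotv v v *: u - dotv u v *: v).
rewrite dotv_scale_sub; have := dotv_gt0 v v_neq0; nra.
Qed.

Lemma sqr_enorm u : enorm u ^+ 2 = dotv u u.
Proof. exact/sqr_sqrtr/dotv_ge0. Qed.

Lemma enorm_gt0 u : u != 0 -> 0 < enorm u.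
Proof. by move=> u_neq0; rewrite sqrtr_gt0 dotv_gt0. Qed.

Lemma enormZ (a : R) u : enorm (a *: u) = `|a| * enorm u.
Proof. by rewrite /enorm dotvZ sqrtrM ?sqr_ge0 // sqrtr_sqr. Qed.

Lemma normr_dotv_le u v : `|dotv u v| <= enorm u * enorm v.
Proof.
rewrite -ler_sqr ?nnegrE ?mulr_ge0 ?sqrtr_ge0 //.
by rewrite real_normK ?num_real // exprMn !sqr_enorm cauchy_schwarz.
Qed.

Lemma sqr_enorm_triangle u v :
  (enorm u - enorm v) ^+ 2 <= enorm (v - u) ^+ 2 <= (enorm u + enorm v) ^+ 2.
Proof.
have := normr_dotv_le u v; rewrite ler_norml => /andP[lo hi].
have := dotv_polar u v; rewrite -!sqr_enorm => polar.
by apply/andP; split; nra.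
Qed.

End EuclideanSpace.

Lemma phi_sidesE {R : realType} {n : nat} (alpha : R) (mu x : 'rV[R]_n) :
  x != 0 -> x + mu != 0 ->
  phi alpha mu x = phi_sides (1 - 2 * alpha) (enorm x) (enorm (x + mu)) (enorm mu).
Proof.
move=> x_neq0 xmu_neq0.
have p_gt0 := enorm_gt0 x x_neq0; have q_gt0 := enorm_gt0 (x + mu) xmu_neq0.
rewrite /phi /Yf dotv_scale_sub dotv_polar [x + mu - x]addrAC subrr add0r.
rewrite -!sqr_enorm !powRN_div // /phi_sides.
by field; rewrite !gt_eqF.
Qed.

Theorem lemma5 (R : realType) (n : nat) (mu : 'rV[R]_n) (alpha : R) :
  (1 <= n)%N -> mu != 0 -> 0 < alpha -> alpha < 1 / 2 ->
  let x0 := - ((1 / 2 : R) *: mu) in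
  (x0 != 0 /\ x0 != - mu) /\
  forall x : 'rV[R]_n, x != 0 -> x != - mu ->
    phi alpha mu x <= phi alpha mu x0.
Proof.
move=> _ mu_neq0 alpha_gt0 alpha_lt_half x0.
have half_neq0 : (1 / 2 : R) != 0 by rewrite mul1r invr_eq0 pnatr_eq0.
have x0E : x0 = - (1 / 2) *: mu by rewrite /x0 scaleNr.
have x0muE : x0 + mu = (1 / 2) *: mu.
  by rewrite x0E -{2}(scale1r mu) -scalerDl; congr (_ *: _); field.
have x0_neq0 : x0 != 0 by rewrite x0E scaler_eq0 negb_or oppr_eq0 half_neq0.
have x0mu_neq0 : x0 + mu != 0 by rewrite x0muE scaler_eq0 negb_or half_neq0.
split; first by split=> //; apply: contraNneq x0mu_neq0 => ->; rewrite addNr.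
move=> x x_neq0 x_neq_Nmu.
have xmu_neq0 : x + mu != 0 by rewrite addr_eq0.
have m_gt0 := enorm_gt0 mu mu_neq0.
rewrite !phi_sidesE // x0muE x0E !enormZ normrN ger0_norm ?divr_ge0 // mul1r [2^-1 * _]mulrC.
set b := 1 - 2 * alpha; set m := enorm mu.
have -> : phi_sides b (m / 2) (m / 2) m = 4 * ((m / 2) `^ b) ^+ 2.
  by rewrite /phi_sides; field; rewrite gt_eqF.
have b_gt0 : 0 < b by rewrite /b; lra.
have b_lt1 : b < 1 by rewrite /b; lra.
have := sqr_enorm_triangle x (x + mu); rewrite [x + mu - x]addrAC subrr add0r.
exact: phi_sides_le b b_gt0 b_lt1 _ _ _ (enorm_gt0 x x_neq0) (enorm_gt0 (x + mu) xmu_neq0)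
  (ltW m_gt0).
Qed.
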